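(* Let $F,\Gamma$ be convergence spaces, $R\subseteq F\times\Gamma$ a relation closed in the product convergence, and $A\subseteq R$. Let $H:\Gamma\to\Gamma$ satisfy $(f',H(\gamma'))\in R$ for all $(f',\gamma')\in A$, and let $(f,\gamma)\in R$ be such that $H$ is continuous at $\gamma$ and $(f,H(\gamma))\notin R$. Then $(f,\gamma)\notin\overline{A}$.
   Context: A convergence space is a set with a relation $(x_i)\to x$ between nets and points such that constant nets converge to their value, subnets of a convergent net converge to the same limit (where $(y_j)$ is a subnet of $(x_i)$ if for each $i_0$ there is $j_0$ with $\{y_j\}_{j\ge j_0}\subseteq\{x_i\}_{i\ge i_0}$), and if $(x_i)_{i\in I}\to x$, $(y_i)_{i\in I}\to x$, $z_i\in\{x_i,y_i\}$ then $(z_i)\to x$. Product convergence: componentwise. $\overline B$ is the set of limits of nets in $B$; $B$ closed if $\overline B=B$. $H$ continuous at $\gamma$: $(\gamma_i)\to\gamma$ implies $(H(\gamma_i))\to H(\gamma)$. *)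

Record directed (I : Type) : Type := Directed {
  dle : I -> I -> Prop;
  dle_refl : forall i, dle i i;
  dle_trans : forall i j k, dle i j -> dle j k -> dle i k;
  d_upper : forall i j, exists k, dle i k /\ dle j k;
  d_inhab : exists i : I, True
}.
Arguments dle {I} _ _ _.

Definition subnet {X I J : Type} (DI : directed I) (DJ : directed J)
  (y : J -> X) (x : I -> X) : Prop :=
  forall i0 : I, exists j0 : J, forall j : J, dle DJ j0 j ->
    exists i : I, dle DI i0 i /\ y j = x i.

Record convergence_space : Type := ConvSpace {
  carrier :> Type;
  conv : forall (I : Type) (D : directed I), (I -> carrier) -> carrier -> Prop;
  conv_const : forall I (D : directed I) (x : carrier), conv I D (fun _ => x) x;
  conv_subnet : forall I (DI : directed I) J (DJ : directed J)
      (x : I -> carrier) (y : J -> carrier) (p : carrier),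
      conv I DI x p -> subnet DI DJ y x -> conv J DJ y p;
  conv_mix : forall I (D : directed I) (x y z : I -> carrier) (p : carrier),
      conv I D x p -> conv I D y p ->
      (forall i, z i = x i \/ z i = y i) -> conv I D z p
}.
Arguments conv {c} I D _ _.

Definition prod_conv (X Y : convergence_space) (I : Type) (D : directed I)
  (z : I -> X * Y) (p : X * Y) : Prop :=
  conv I D (fun i => fst (z i)) (fst p) /\ conv I D (fun i => snd (z i)) (snd p).

Definition prod_closure (X Y : convergence_space) (B : X * Y -> Prop) : X * Y -> Prop :=
  fun p => exists (I : Type) (D : directed I) (z : I -> X * Y),
    (forall i, B (z i)) /\ prod_conv X Y I D z p.

Definition prod_closed (X Y : convergence_space) (B : X * Y -> Prop) : Prop :=
  forall p, prod_closure X Y B p <-> B p.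

Definition continuous_at {X Y : convergence_space} (H : X -> Y) (x : X) : Prop :=
  forall I (D : directed I) (u : I -> X), conv I D u x -> conv I D (fun i => H (u i)) (H x).


Lemma prod_closure_map_snd (X Y Z : convergence_space) (H : Y -> Z)
  (B : X * Y -> Prop) (C : X * Z -> Prop) (x : X) (y : Y) :
  continuous_at H y ->
  (forall p, B p -> C (fst p, H (snd p))) ->
  prod_closure X Y B (x, y) -> prod_closure X Z C (x, H y).
Proof.
  intros Hcont HBC [I [D [z [Hz [Hfst Hsnd]]]]].
  exists I, D, (fun i => (fst (z i), H (snd (z i)))).
  split.
  - intro i. apply HBC, Hz.
  - split; simpl.
    + exact Hfst.
    + exact (Hcont I D (fun i => snd (z i)) Hsnd).
Qed.

Theorem corollary3p2 (F G : convergence_space) (R A : F * G -> Prop)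
  (H : G -> G) (f : F) (g : G) :
  prod_closed F G R ->
  (forall p, A p -> R p) ->
  (forall (f' : F) (g' : G), A (f', g') -> R (f', H g')) ->
  R (f, g) ->
  continuous_at H g ->
  ~ R (f, H g) ->
  ~ prod_closure F G A (f, g).
Proof.
  intros Hcl _ HAH _ Hcont HnR HAcl.
  apply HnR, Hcl.
  apply (prod_closure_map_snd F G G H A R f g Hcont); [| exact HAcl].
  intros [f' g']. apply HAH.
Qed.
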